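(* Let $p,q\ge 1$ be integers with $p\neq q$ such that $q(2q-p-1)/(q-p)$ is a positive integer. Then the mixed extension of $P_3$ of type $\big(p,\,-q,\,q(2q-p-1)/(q-p)\big)$ and the mixed extension of $P_3$ of type $\big(-q,\,2q-1,\,p(2q-p-1)/(q-p)\big)$ are cospectral (have the same adjacency spectrum).
   Context: Let $P_3$ be the path with vertices $1,2,3$ and edges $\{1,2\},\{2,3\}$. For nonzero integers $t_1,t_2,t_3$, the mixed extension of $P_3$ of type $(t_1,t_2,t_3)$ is the graph whose vertex set is a disjoint union $V_1\cup V_2\cup V_3$ with $|V_i|=|t_i|$, where $V_i$ is a clique if $t_i>0$ and a coclique (independent set) if $t_i<0$, every vertex of $V_2$ is adjacent to every vertex of $V_1\cup V_3$, and there are no edges between $V_1$ and $V_3$. Two graphs are cospectral if their adjacency matrices have the same characteristic polynomial. *)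

From mathcomp Require Import all_boot all_order all_algebra.
Set Implicit Arguments. Unset Strict Implicit. Unset Printing Implicit Defensive.
Import Order.TTheory GRing.Theory Num.Theory.
Local Open Scope ring_scope.

(* Vertices of the mixed extension of P_3 of type (t1,t2,t3) are the ordinals
   0 .. |t1|+|t2|+|t3|-1; vertex i lies in V_1 (block 0) if i < |t1|,
   in V_2 (block 1) if |t1| <= i < |t1|+|t2|, and in V_3 (block 2) otherwise. *)
Definition mixed_block (a b : nat) (i : nat) : nat :=
  if (i < a)%N then 0%N else if (i < a + b)%N then 1%N else 2%N.

Definition block_is_clique (t1 t2 t3 : int) (k : nat) : bool :=
  if k == 0%N then 0 < t1 else if k == 1%N then 0 < t2 else 0 < t3.

Definition mixed_n (t1 t2 t3 : int) : nat := (`|t1| + `|t2| + `|t3|)%N.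

Definition mixed_adj_rel (t1 t2 t3 : int) (i j : 'I_(mixed_n t1 t2 t3)) : bool :=
  let bi := mixed_block `|t1| `|t2| i in
  let bj := mixed_block `|t1| `|t2| j in
  (i != j) &&
  (if bi == bj then block_is_clique t1 t2 t3 bi
   else (bi == 1%N) || (bj == 1%N)).

Definition mixed_adj (t1 t2 t3 : int) : 'M[int]_(mixed_n t1 t2 t3) :=
  \matrix_(i < mixed_n t1 t2 t3, j < mixed_n t1 t2 t3) (@mixed_adj_rel t1 t2 t3 i j)%:R.

Definition cospectral (m n : nat) (A : 'M[int]_m) (B : 'M[int]_n) : Prop :=
  char_poly A = char_poly B.

From mathcomp Require Import all_boot all_order all_algebra.
From mathcomp Require Import intdiv.
From mathcomp Require Import zify ring.
Import Order.TTheory GRing.Theory Num.Theory.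
Local Open Scope ring_scope.

(* With e_k = 1 on cliques and 0 on cocliques, the matrix x I - A of a mixed
   extension is D - P S P^T, where D = diag(x + e_(block i)), P is the n x 3
   block-indicator matrix and S the 3 x 3 quotient matrix.  Sylvester's
   determinant identity turns det(x I - A) into prod_k (x + e_k)^(n_k) times
   the 3 x 3 determinant det(I - S W), W = diag(n_k / (x + e_k)).  For the
   types (p, -q, r) and (-q, 2q - 1, r') of the theorem the prefactors agree
   because p + r = (2q - 1) + r', and the 3 x 3 determinants differ by (x + 2q) (q (2q - p - 1) - r (q - p)) /
   (x (x + 1)^2), which vanishes by the definition of r.  Agreement at
   x = 1, 2, 3, ... gives equal characteristic polynomials. *)

Lemma sylvester_det (R : comNzRingType) m k (U : 'M[R]_(m, k)) (V : 'M[R]_(k, m)) :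
  \det (1%:M - U *m V) = \det (1%:M - V *m U).
Proof.
pose M := block_mx (1%:M : 'M[R]_m) U V (1%:M : 'M[R]_k).
have detM_l : \det M = \det (1%:M - V *m U).
  have : block_mx 1%:M 0 (- V) 1%:M *m M = block_mx 1%:M U 0 (1%:M - V *m U).
    by rewrite /M mulmx_block !mulmx1 !mul1mx !mul0mx !addr0 addNr addrC mulNmx.
  by move/(congr1 determinant); rewrite det_mulmx det_lblock det_ublock !det1 !mul1r.
have detM_u : \det M = \det (1%:M - U *m V).
  have : block_mx 1%:M (- U) 0 1%:M *m M = block_mx (1%:M - U *m V) 0 V 1%:M.
    by rewrite /M mulmx_block !mulmx1 !mul1mx !mul0mx !add0r addrN mulNmx.
  by move/(congr1 determinant); rewrite det_mulmx det_lblock det_ublock !det1 !mul1r mulr1.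
by rewrite -detM_u detM_l.
Qed.

Definition i0 : 'I_3 := @Ordinal 3 0 isT.
Definition i1 : 'I_3 := @Ordinal 3 1 isT.
Definition i2 : 'I_3 := @Ordinal 3 2 isT.

Lemma det_mx33 (R : comNzRingType) (M : 'M[R]_3) :
  \det M = M i0 i0 * (M i1 i1 * M i2 i2 - M i1 i2 * M i2 i1)
         - M i0 i1 * (M i1 i0 * M i2 i2 - M i1 i2 * M i2 i0)
         + M i0 i2 * (M i1 i0 * M i2 i1 - M i1 i1 * M i2 i0).
Proof.
have -> : M = \matrix_(i, j) M (inord i) (inord j).
  by apply/matrixP=> i j; rewrite mxE !inord_val.
rewrite (expand_det_row _ i0) !big_ord_recl big_ord0 /cofactor.
rewrite !(expand_det_row _ ord0) !big_ord_recl !big_ord0 /cofactor !det_mx11 !mxE /=.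
by rewrite /bump /=; ring.
Qed.

Lemma horner_char_poly (R : comNzRingType) n (A : 'M[R]_n) (x : R) :
  (char_poly A).[x] = \det (x%:M - A).
Proof.
rewrite /char_poly /char_poly_mx -[_.[x]]/(horner_eval x _) -det_map_mx.
congr (\det _); apply/matrixP => i j.
by rewrite !mxE rmorphB /= !horner_evalE hornerMn hornerX hornerC.
Qed.

Lemma poly_eq_on_posnat (R : numDomainType) (P Q : {poly R}) :
  (forall k : nat, P.[k.+1%:R] = Q.[k.+1%:R]) -> P = Q.
Proof.
move=> PQ; apply/eqP; rewrite -subr_eq0; apply/eqP.
apply: (@roots_geq_poly_eq0 _ _ [seq k.+1%:R | k <- iota 0 (size (P - Q))]).
- by apply/allP => _ /mapP [k _ ->]; rewrite /root hornerD hornerN PQ subrr.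
- by rewrite map_inj_uniq ?iota_uniq // => i j /eqP; rewrite eqr_nat eqSS => /eqP.
- by rewrite size_map size_iota.
Qed.

Lemma mixed_block_lt3 a b i : (mixed_block a b i < 3)%N.
Proof. by rewrite /mixed_block; case: ifP => // _; case: ifP. Qed.

Section MixedBlocks.
Variables t1 t2 t3 : int.
Local Notation n := (mixed_n t1 t2 t3).

Definition block_type (k : 'I_3) : int := nth 0 [:: t1; t2; t3] k.
Definition block_of (i : 'I_n) : 'I_3 := Ordinal (mixed_block_lt3 `|t1| `|t2| i).

Lemma big_blocks (R : Type) (idx : R) (op : Monoid.law idx) (F : 'I_3 -> R) :
  \big[op/idx]_(i < n) F (block_of i) =
  \big[op/idx]_(k < 3) \big[op/idx]_(j < `|block_type k|) F k.
Proof.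
rewrite /mixed_n !big_split_ord !big_ord_recr big_ord0 Monoid.mul1m /=.
congr (op (op _ _) _); apply: eq_bigr => i _; congr F; apply/val_inj => /=;
  rewrite /mixed_block; have := ltn_ord i.
- by move=> ->.
- by move=> ?; case: ltnP => ?; [lia|]; case: ltnP => ? //; lia.
- by move=> ?; case: ltnP => ?; [lia|]; case: ltnP => ? //; lia.
Qed.

Lemma sum_blocks (V : nmodType) (F : 'I_3 -> V) :
  \sum_(i < n) F (block_of i) = \sum_(k < 3) F k *+ `|block_type k|.
Proof. by rewrite big_blocks; apply: eq_bigr => k _; rewrite sumr_const card_ord. Qed.

Lemma prod_blocks (R : comPzSemiRingType) (F : 'I_3 -> R) :
  \prod_(i < n) F (block_of i) = \prod_(k < 3) F k ^+ `|block_type k|.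
Proof. by rewrite big_blocks; apply: eq_bigr => k _; rewrite prodr_const card_ord. Qed.

Lemma block_is_cliqueE (i : 'I_n) :
  block_is_clique t1 t2 t3 (mixed_block `|t1| `|t2| i) = (0 < block_type (block_of i)).
Proof.
rewrite /block_type /=.
by case: (mixed_block _ _ _) (mixed_block_lt3 `|t1| `|t2| i) => [|[|[|]]].
Qed.

Lemma mxsub_block_of (R : pzRingType) (S : 'M[R]_3) :
  mxsub block_of block_of S = rowsub block_of 1%:M *m S *m colsub block_of 1%:M.
Proof. by rewrite mulmx_colsub mulmx1 -rowsubE; apply/matrixP => i j; rewrite !mxE. Qed.

Lemma colsub_diag_rowsub (R : pzRingType) (f : 'I_3 -> R) :
  colsub block_of 1%:M *m diag_mx (\row_i f (block_of i)) *m rowsub block_of 1%:M =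
  diag_mx (\row_k (f k *+ `|block_type k|)).
Proof.
apply/matrixP => k l; rewrite mul_mx_diag !mxE.
under eq_bigr do rewrite !mxE.
rewrite (sum_blocks _ (fun m => (k == m)%:R * f m * (m == l)%:R)).
rewrite (bigD1 k) //= big1 => [|m /negPf km]; last by rewrite eq_sym km !mul0r mul0rn.
by rewrite eqxx mul1r addr0; case: eqP => [->|_]; rewrite ?mulr1 ?mulr0 ?mul0rn.
Qed.

End MixedBlocks.

Definition clique_ind {R : pzSemiRingType} (t : int) : R := (0 < t)%R%:R.

Definition block_weight {F : fieldType} (x : F) (t : int) : F :=
  `|t|%:R / (x + clique_ind t).

(* The expansion of [\det (1%:M - S *m diag_mx w)], where [S] is the quotient
   matrix of a mixed extension of P_3: the clique indicators [e] on its
   diagonal and the adjacency matrix of P_3 off it. *)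
Definition p3_quotient_det {R : pzRingType} (e1 e2 e3 w1 w2 w3 : R) : R :=
  (1 - e1 * w1) * ((1 - e2 * w2) * (1 - e3 * w3) - w2 * w3) - w1 * w2 * (1 - e3 * w3).

Section MixedCharPoly.
Variables (t1 t2 t3 : int) (F : fieldType) (x : F).
Hypotheses (x_neq0 : x != 0) (x1_neq0 : x + 1 != 0).
Local Notation e k := (clique_ind (block_type t1 t2 t3 k) : F).
Local Notation block_of := (@block_of t1 t2 t3).

Definition p3_quotient_mx : 'M[F]_3 :=
  \matrix_(k, l) (if k == l :> nat then 0 < block_type t1 t2 t3 k
                  else (k == 1 :> nat) || (l == 1 :> nat))%R%:R.

Lemma char_mx_mixedE :
  x%:M - map_mx intr (mixed_adj t1 t2 t3) =
  diag_mx (\row_i (x + e (block_of i))) - mxsub block_of block_of p3_quotient_mx.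
Proof.
apply/matrixP => i j; rewrite !mxE /mixed_adj_rel /=.
case: eqP => [<-|_] /=; first by rewrite eqxx /= !mulr1n subr0 addrK.
by rewrite !mulr0n !sub0r rmorph_nat block_is_cliqueE.
Qed.

Lemma det_char_mx_mixed :
  \det (x%:M - map_mx intr (mixed_adj t1 t2 t3)) =
  \prod_(k < 3) (x + e k) ^+ `|block_type t1 t2 t3 k| *
  \det (1%:M - p3_quotient_mx *m diag_mx (\row_k block_weight x (block_type t1 t2 t3 k))).
Proof.
pose D := diag_mx (\row_i (x + e (block_of i))).
pose Dinv := diag_mx (\row_i (x + e (block_of i))^-1).
have shift_neq0 k : x + e k != 0 by rewrite /clique_ind; case: (0 < _)%R; rewrite ?addr0.
have DDinv : D *m Dinv = 1%:M.
  by rewrite mulmx_diag; apply/matrixP => i j; rewrite !mxE mulfV ?shift_neq0.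
rewrite char_mx_mixedE mxsub_block_of.
set P := rowsub block_of 1%:M; set Q := colsub block_of 1%:M.
have -> : D - P *m p3_quotient_mx *m Q = D *m (1%:M - (Dinv *m P) *m (p3_quotient_mx *m Q)).
  by rewrite mulmxBr mulmx1 !mulmxA DDinv mul1mx.
rewrite det_mulmx sylvester_det -!mulmxA (mulmxA Q) /Dinv.
rewrite (colsub_diag_rowsub t1 t2 t3 _ (fun k => (x + e k)^-1)).
rewrite det_diag (eq_bigr (fun i => x + e (block_of i))) => [|i _]; last by rewrite mxE.
rewrite (prod_blocks t1 t2 t3 _ (fun k => x + e k)).
congr (_ * \det (1%:M - _ *m diag_mx _)).
by apply/rowP => k; rewrite !mxE /block_weight mulr_natl.
Qed.

End MixedCharPoly.

Lemma horner_char_poly_mixed (F : fieldType) (t1 t2 t3 : int) (x : F) :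
  x != 0 -> x + 1 != 0 ->
  (map_poly intr (char_poly (mixed_adj t1 t2 t3))).[x] =
  (x + clique_ind t1) ^+ `|t1| * (x + clique_ind t2) ^+ `|t2| *
  (x + clique_ind t3) ^+ `|t3| *
  p3_quotient_det (clique_ind t1) (clique_ind t2) (clique_ind t3)
    (block_weight x t1) (block_weight x t2) (block_weight x t3).
Proof.
move=> x_neq0 x1_neq0; rewrite map_char_poly horner_char_poly det_char_mx_mixed //.
rewrite !big_ord_recl big_ord0 mulr1 mul_mx_diag det_mx33 !mxE /=.
by rewrite /p3_quotient_det /clique_ind /=; ring.
Qed.

Lemma clique_ind_pos {R : pzSemiRingType} {t : int} : 0 < t -> clique_ind t = 1 :> R.
Proof. by rewrite /clique_ind => ->. Qed.

Lemma clique_ind_neg {R : pzSemiRingType} {t : int} : t < 0 -> clique_ind t = 0 :> R.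
Proof. by move=> t_lt0; rewrite /clique_ind ltNge ltW. Qed.

Lemma block_weight_pos {F : fieldType} (x : F) {t : int} :
  0 < t -> block_weight x t = t%:~R / (x + 1).
Proof.
by move=> t_gt0; rewrite /block_weight clique_ind_pos // -[in RHS](gez0_abs (ltW t_gt0)).
Qed.

Lemma block_weight_neg {F : fieldType} (x : F) {t : int} :
  t < 0 -> block_weight x t = (- t)%:~R / x.
Proof. by move=> t_lt0; rewrite /block_weight clique_ind_neg // addr0 -ltz0_abs. Qed.

Lemma p3_quotient_det_swap (F : fieldType) (x : F) (p q r : int) :
  x != 0 -> x + 1 != 0 -> r * (q - p) = q * (2 * q - p - 1) ->
  p3_quotient_det 1 0 1 (p%:~R / (x + 1)) (q%:~R / x) (r%:~R / (x + 1)) =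
  p3_quotient_det 0 1 1 (q%:~R / x) ((2 * q - 1)%:~R / (x + 1))
    ((r - (2 * q - p - 1))%:~R / (x + 1)).
Proof.
move=> x_neq0 x1_neq0 hr; apply/eqP; rewrite -subr_eq0.
have -> : p3_quotient_det 1 0 1 (p%:~R / (x + 1)) (q%:~R / x) (r%:~R / (x + 1)) -
    p3_quotient_det 0 1 1 (q%:~R / x) ((2 * q - 1)%:~R / (x + 1))
      ((r - (2 * q - p - 1))%:~R / (x + 1)) =
    (x + 2 * q%:~R) * (q * (2 * q - p - 1) - r * (q - p))%:~R /
      (x * (x + 1) ^+ 2).
  by rewrite /p3_quotient_det; field; rewrite x_neq0 x1_neq0.
by rewrite hr subrr mulr0 mul0r.
Qed.

Theorem proposition4 (p q : int) :
  1 <= p -> 1 <= q -> p != q ->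
  (q - p %| q * (2 * q - p - 1))%Z ->
  0 < ((q * (2 * q - p - 1)) %/ (q - p))%Z ->
  cospectral (mixed_adj p (- q) (((q * (2 * q - p - 1)) %/ (q - p))%Z))
             (mixed_adj (- q) (2 * q - 1) (((p * (2 * q - p - 1)) %/ (q - p))%Z)).
Proof.
move=> p_ge1 q_ge1 p_neq_q dvd_r r_gt0.
set r := ((q * _) %/ _)%Z in r_gt0 *; set r' := ((p * _) %/ _)%Z.
have r_eq : r * (q - p) = q * (2 * q - p - 1) by rewrite divzK.
have r'_eq : r' = r - (2 * q - p - 1).
  have qp_neq0 : q - p != 0 by rewrite subr_eq0 eq_sym.
  have p_eq : p * (2 * q - p - 1) = (r - (2 * q - p - 1)) * (q - p).
    by rewrite mulrBl r_eq; ring.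
  by rewrite /r' p_eq mulzK.
have r'_gt0 : 0 < r' by rewrite r'_eq; nia.
have [p_gt0 mq_lt0 s_gt0] : [/\ 0 < p, - q < 0 & 0 < 2 * q - 1] by split; lia.
apply: (map_inj_poly (@intr_inj rat) (rmorph0 _)); apply: poly_eq_on_posnat => k.
set x : rat := k.+1%:R.
have x_neq0 : x != 0 by rewrite pnatr_eq0.
have x1_neq0 : x + 1 != 0 by rewrite natr1 pnatr_eq0.
rewrite !horner_char_poly_mixed // (clique_ind_neg mq_lt0) !(block_weight_neg _ mq_lt0).
rewrite !clique_ind_pos // !block_weight_pos // opprK addr0.
congr (_ * _); last by rewrite r'_eq p3_quotient_det_swap.
have exp_eq : (`|p| + `|r| = `|(2 * q - 1)%R| + `|r'|)%N by lia.
by rewrite mulrAC -exprD -mulrA -exprD exp_eq mulrC.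
Qed.
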